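(* Fix $m\ge1$, $\theta\in(0,1]$ and a homogeneous voting rule $f$. Suppose there is $\epsilon>0$ such that $f$ is not CM in every continuous profile $P'$ of total weight $1$ with $\max_p|w(p,P')-w(p,\hat P)|<\epsilon$. Then for every $n\ge1$, $$\rho(f,m,n,\theta)\le 2\,m!\,e^{-2\epsilon^2 n}.$$
   Context: A ranking is a strict total order on $\{1,\dots,m\}$. A discrete profile $P$ consists of candidates, $n$ voters and a ranking $P_v$ per voter; $w(p,P)$ is the number of voters with ranking $p$. A continuous profile consists of candidates, total weight $w(P)>0$ and weights $w(p,P)\ge0$ summing to $w(P)$; the normalized profile $\bar P$ has weights $w(p,P)/w(P)$. A voting rule maps every profile (discrete or continuous) to one of its candidates; homogeneous means $f(P)=f(\bar P)$. CM (discrete): $f$ is CM in discrete $P$ if there is a discrete $Q$ with the same candidates and voters, $f(Q)\ne f(P)$, and every voter $v$ with $Q_v\ne P_v$ prefers $f(Q)$ to $f(P)$ according to $P_v$. CM (continuous): $f$ is CM in continuous $P$ if there is a continuous $Q$ with the same candidates and total weight, $f(Q)\ne f(P)$, and every ranking $p$ with $w(p,Q)<w(p,P)$ prefers $f(Q)$ to $f(P)$. Perturbed Culture ($m,n\ge1$, $\theta\in(0,1]$): random discrete profile with candidates $\{1,\dots,m\}$, voters $\{1,\dots,n\}$, each voter independently having ranking $1\succ\cdots\succ m$ with probability $\theta$ and a uniformly random ranking with probability $1-\theta$. $\hat P$: total weight $1$, weight $\theta+\frac{1-\theta}{m!}$ on $1\succ\cdots\succ m$ and $\frac{1-\theta}{m!}$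 on each other ranking. $\rho(f,m,n,\theta)$: probability that $f$ is CM in the random profile. *)

From HB Require Import structures.
From mathcomp Require Import all_boot all_order all_algebra all_fingroup.
From mathcomp Require Import reals.
From mathcomp Require Import sequences exp.
Set Implicit Arguments. Unset Strict Implicit. Unset Printing Implicit Defensive.
Import Order.TTheory GRing.Theory Num.Theory.
Local Open Scope ring_scope.

(* Candidates are 'I_m (candidate i+1 of the paper is the ordinal i).
   A ranking is a permutation p : {perm 'I_m}, where p k is the candidate
   placed in position k (position 0 = top).  *)
Definition ranking (m : nat) := {perm 'I_m}.

Definition prefers m (p : ranking m) (a b : 'I_m) : bool :=
  (nat_of_ord ((p^-1)%g a) < nat_of_ord ((p^-1)%g b))%N.

Definition id_ranking m : ranking m := 1%g.

Definition dprofile m n := {ffun 'I_n -> ranking m}.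

(* A continuous profile: a weight function (valid when nonnegative with
   positive total). *)
Definition cweights (R : realType) m := {ffun ranking m -> R}.

Definition total_weight (R : realType) m (w : cweights R m) : R := \sum_p w p.

Definition valid_cprofile (R : realType) m (w : cweights R m) : Prop :=
  (forall p, 0 <= w p) /\ 0 < total_weight w.

Definition dweight m n (P : dprofile m n) (p : ranking m) : nat :=
  #|[set v | P v == p]|.

Definition normalize (R : realType) m (w : cweights R m) : cweights R m :=
  [ffun p => w p / total_weight w].

Definition dnormalize (R : realType) m n (P : dprofile m n) : cweights R m :=
  [ffun p => (dweight P p)%:R / n%:R].

(* A voting rule on m candidates: it maps discrete profiles (any number of
   voters) and continuous profiles to a candidate.  (Its value on invalid
   weight functions is irrelevant.) *)
Record voting_rule (R : realType) (m : nat) := VotingRule {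
  vr_disc : forall n, dprofile m n -> 'I_m;
  vr_cont : cweights R m -> 'I_m }.

Definition homogeneous (R : realType) m (f : voting_rule R m) : Prop :=
  (forall n (P : dprofile m n), (0 < n)%N ->
      vr_disc f P = vr_cont f (dnormalize R P)) /\
  (forall w : cweights R m, valid_cprofile w ->
      vr_cont f w = vr_cont f (normalize w)).

Definition CM_disc (R : realType) m (f : voting_rule R m) n (P : dprofile m n)
  : bool :=
  [exists Q : dprofile m n,
     (vr_disc f Q != vr_disc f P) &&
     [forall v, (Q v != P v) ==> prefers (P v) (vr_disc f Q) (vr_disc f P)]].

Definition CM_cont (R : realType) m (f : voting_rule R m) (w : cweights R m)
  : Prop :=
  exists w' : cweights R m,
    [/\ valid_cprofile w', total_weight w' = total_weight w,
        vr_cont f w' != vr_cont f w &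
        forall p, w' p < w p -> prefers p (vr_cont f w') (vr_cont f w)].

Definition hatP (R : realType) m (theta : R) : cweights R m :=
  [ffun p => (if p == id_ranking m then theta else 0) + (1 - theta) / (m`!)%:R].

Definition pc_prob (R : realType) m (theta : R) (p : ranking m) : R :=
  theta * (p == id_ranking m)%:R + (1 - theta) * (1 / (m`!)%:R).

(* rho(f, m, n, theta): probability (under the product distribution of n
   independent voters) that f is CM in the random discrete profile. *)
Definition rho (R : realType) m (f : voting_rule R m) (n : nat) (theta : R) : R :=
  \sum_(P : dprofile m n | CM_disc f P) \prod_(v : 'I_n) pc_prob theta (P v).

From HB Require Import structures.
From mathcomp Require Import all_boot all_order all_algebra all_fingroup.
From mathcomp Require Import reals.
From mathcomp Require Import sequences exp.
From mathcomp Require Import all_classical all_reals.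
From mathcomp Require Import topology normedtype derive realfun.
From mathcomp Require Import ring lra.
Set Implicit Arguments. Unset Strict Implicit. Unset Printing Implicit Defensive.
Import Order.TTheory GRing.Theory Num.Theory numFieldNormedType.Exports.
Local Open Scope ring_scope.

(* If [f] is manipulable at a discrete profile [P], a manipulating profile [Q]
   normalizes to a manipulation of the normalized profile of [P] (homogeneity),
   so by hypothesis the empirical frequency of some ranking [p] in [P] is at
   least [eps] away from its Perturbed-Culture probability.  For each fixed [p]
   that happens with probability at most [2 exp (-2 eps^2 n)], by Hoeffding's
   inequality for the binomial count of voters ranking [p] (one tail per side);
   a union bound over the [m!] rankings finishes. *)

Section HoeffdingBernoulli.
Variables (R : realType) (q : R).
Hypotheses (q_ge0 : 0 <= q) (q_le1 : q <= 1).

Let mgf (x : R) := 1 - q + q * expR x.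
Let g (x : R) := q + x / 4 - q * expR x / mgf x.
Let k (x : R) := mgf x * expR (- (x * q + x ^+ 2 / 8)).

Let mgf_gt0 (x : R) : 0 < mgf x.
Proof.
rewrite /mgf; have [->|q_neq0] := eqVneq q 0; first by rewrite mul0r subr0 addr0.
by rewrite ltr_wpDl ?subr_ge0 // mulr_gt0 ?expR_gt0 // lt0r q_neq0.
Qed.

Let mgf_derive (x : R) : is_derive x 1 mgf (q * expR x).
Proof. by rewrite /mgf; apply: is_derive_eq; rewrite add0r mul1r. Qed.

Let g_derive (x : R) :
  is_derive x 1 g (1 / 4 - q * (1 - q) * expR x / mgf x ^+ 2).
Proof.
have mgf_neq0 := lt0r_neq0 (mgf_gt0 x).
have mgfV_derive := is_deriveV mgf_neq0 (mgf_derive x).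
rewrite /g; apply: is_derive_eq; rewrite /mgf in mgf_neq0 *.
by rewrite /GRing.scale /=; field.
Qed.

(* AM-GM: [4 q (1 - q) e^x <= (1 - q + q e^x)^2]. *)
Let g_derive_ge0 (x : R) : 0 <= 1 / 4 - q * (1 - q) * expR x / mgf x ^+ 2.
Proof.
rewrite subr_ge0 ler_pdivrMr ?exprn_gt0 // /mgf.
have := expR_gt0 x; set e := expR x => e_gt0.
have := sqr_ge0 (1 - q - q * e); nra.
Qed.

Let g_ge0 (x : R) : 0 <= x -> 0 <= g x.
Proof.
move=> x_ge0.
have -> : 0 = g 0 by rewrite /g /mgf expR0 mulr1 subrK mul0r addr0 divr1 subrr.
apply: (@ger0_derive1_ndecr _ g 0 x) => //.
- by move=> y _; case: (g_derive y).
- by move=> y _; rewrite derive1E; case: (g_derive y) => _ ->.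
- by apply: derivable_within_continuous => y _; case: (g_derive y).
Qed.

Let k_derive (x : R) :
  is_derive x 1 k (- (expR (- (x * q + x ^+ 2 / 8)) * mgf x * g x)).
Proof.
have : is_derive x 1 (fun y : R => - (y * q + y ^+ 2 / 8)) (- (q + x / 4)).
  by apply: is_derive_eq; rewrite /GRing.scale /=; field.
move/(is_derive1_comp (is_derive_expR _)) => expR_derive.
have mgf_neq0 := lt0r_neq0 (mgf_gt0 x).
rewrite /k; apply: is_derive_eq; rewrite /GRing.scale /= /g.
by rewrite /mgf in mgf_neq0 *; field.
Qed.

(* [k' = - e^(..) mgf g] and [g >= 0] on [0, +oo) (since [g 0 = 0], [g' >= 0]),
   so [k s <= k 0 = 1]. *)
Lemma hoeffding_bernoulli (s : R) :
  0 <= s -> 1 - q + q * expR s <= expR (s * q + s ^+ 2 / 8).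
Proof.
move=> s_ge0; have : k s <= k 0.
  apply: (ler0_derive1_le_cc (f := k) (a := 0) (b := s));
    rewrite ?in_itv /= ?lexx ?s_ge0 //.
  - move=> y; rewrite in_itv /= => /andP[y_ge0 _].
    rewrite derive1E; case: (k_derive y) => _ ->; rewrite oppr_le0.
    by rewrite !mulr_ge0 ?expR_ge0 ?g_ge0 ?ltW ?mgf_gt0.
  - by apply: derivable_within_continuous => y _; case: (k_derive y).
rewrite /k /mgf expR0 mulr1 subrK mul0r expr0n /= mul0r addr0 oppr0 expR0.
by rewrite mulr1 expRN ler_pdivrMr ?expR_gt0 // mul1r.
Qed.

End HoeffdingBernoulli.

Section IIDSamples.
Variables (R : realType) (T : finType) (mu : T -> R).
Hypotheses (mu_ge0 : forall t, 0 <= mu t) (mu_sum1 : \sum_t mu t = 1).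
Variable n : nat.
Local Notation sample := {ffun 'I_n -> T}.

Definition iid_prob (A : pred sample) : R :=
  \sum_(P | A P) \prod_v mu (P v).

Lemma iid_weight_ge0 (P : sample) : 0 <= \prod_v mu (P v).
Proof. by apply: prodr_ge0 => v _; apply: mu_ge0. Qed.

Lemma iid_prob_union_bound (I : finType) (A : I -> pred sample)
    (B : pred sample) :
  (forall P, B P -> exists i, A i P) -> iid_prob B <= \sum_i iid_prob (A i).
Proof.
move=> BA; rewrite /iid_prob big_mkcond /=.
under [leRHS]eq_bigr do rewrite big_mkcond /=.
rewrite [leRHS]exchange_big /=; apply: ler_sum => P _.
case: ifP => [/BA [i Ai] | _]; last first.
  by apply: sumr_ge0 => i _; case: ifP; rewrite ?iid_weight_ge0.
rewrite (bigD1 i) //= Ai lerDl; apply: sumr_ge0 => j _.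
by case: ifP; rewrite ?iid_weight_ge0.
Qed.

Lemma iid_expectation_prod (g : T -> R) :
  \sum_(P : sample) \prod_v (mu (P v) * g (P v))
  = (\sum_t mu t * g t) ^+ n.
Proof.
by rewrite -(bigA_distr_bigA (fun _ t => mu t * g t)) prodr_const card_ord.
Qed.

Lemma card_set_natr (P : sample) (b : pred T) :
  #|[set v | b (P v)]|%:R = \sum_v (b (P v))%:R :> R.
Proof.
rewrite -sum1_card natr_sum big_mkcond /=.
by apply: eq_bigr => v _; rewrite inE; case: (b (P v)).
Qed.

Definition count_tail_event (b : pred T) (eps : R) : pred sample :=
  [pred P : sample |
   n%:R * (\sum_(t | b t) mu t + eps) <= #|[set v | b (P v)]|%:R].

Lemma iid_count_upper_tail (b : pred T) (eps : R) : 0 < eps ->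
  iid_prob (count_tail_event b eps) <= expR (- (2 * eps ^+ 2 * n%:R)).
Proof.
move=> eps_gt0; set q := \sum_(t | b t) mu t; set c := n%:R * (q + eps).
have q_ge0 : 0 <= q by apply: sumr_ge0.
have q_compl : \sum_(t | ~~ b t) mu t = 1 - q.
  by rewrite -mu_sum1 [in RHS](bigID b) /= addrC -/q addrK.
have q_le1 : q <= 1 by rewrite -subr_ge0 -q_compl sumr_ge0.
(* exponential Markov inequality with the optimal parameter [4 eps] *)
set s := 4 * eps; have s_ge0 : 0 <= s by rewrite mulr_ge0 ?ltW.
have markov : iid_prob (count_tail_event b eps) <=
    \sum_(P : sample) \prod_v mu (P v) * expR (s * (#|[set v | b (P v)]|%:R - c)).
  rewrite /iid_prob big_mkcond /=; apply: ler_sum => P _.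
  case: ifP => [c_le | _]; last by rewrite mulr_ge0 ?iid_weight_ge0 ?expR_ge0.
  rewrite ler_peMr ?iid_weight_ge0 // -[leLHS]expR0 ler_expR.
  by rewrite mulr_ge0 // subr_ge0.
have mgf_mu : \sum_t mu t * expR (s * (b t)%:R) = 1 - q + q * expR s.
  rewrite (bigID b) /= -q_compl addrC mulr_suml; congr (_ + _).
    by apply: eq_bigr => t /negbTE ->; rewrite mulr0 expR0 mulr1.
  by apply: eq_bigr => t ->; rewrite mulr1.
apply: (le_trans markov).
have -> : \sum_(P : sample)
      \prod_v mu (P v) * expR (s * (#|[set v | b (P v)]|%:R - c)) =
    expR (- (s * c)) * (1 - q + q * expR s) ^+ n.
  rewrite -mgf_mu -iid_expectation_prod mulr_sumr; apply: eq_bigr => P _.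
  rewrite big_split /= card_set_natr mulrBr expRD mulr_sumr expR_sum.
  by rewrite mulrA mulrC.
apply: (le_trans (y := expR (- (s * c)) * expR (s * q + s ^+ 2 / 8) ^+ n)).
  rewrite ler_wpM2l ?expR_ge0 //.
  rewrite lerXn2r ?nnegrE ?expR_ge0 ?hoeffding_bernoulli //.
  by rewrite addr_ge0 ?subr_ge0 // mulr_ge0 ?expR_ge0.
rewrite -expRM_natl -expRD le_eqVlt; apply/orP; left; apply/eqP.
by congr expR; rewrite /c /s; field.
Qed.

Lemma iid_freq_deviation (t0 : T) (eps : R) : (0 < n)%N -> 0 < eps ->
  iid_prob [pred P : sample |
            eps <= `|#|[set v | P v == t0]|%:R / n%:R - mu t0|]
  <= 2 * expR (- (2 * eps ^+ 2 * n%:R)).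
Proof.
move=> n_gt0 eps_gt0; have n_pos : (0 : R) < n%:R by rewrite ltr0n.
have mu_t0 : \sum_(t | t == t0) mu t = mu t0 by rewrite big_pred1_eq.
have mu_not_t0 : \sum_(t | t != t0) mu t = 1 - mu t0.
  by rewrite -mu_sum1 [in RHS](bigD1 t0) //= addrC addrK.
have card_not_t0 (P : sample) :
    #|[set v | P v != t0]|%:R = n%:R - #|[set v | P v == t0]|%:R :> R.
  have /(congr1 (fun k => k%:R : R)) := cardsC [set v | P v == t0].
  rewrite card_ord natrD => <-.
  have -> : ~: [set v | P v == t0] = [set v | P v != t0].
    by apply/setP => v; rewrite !inE.
  by rewrite addrC addKr.
apply: (le_trans (iid_prob_union_bound (A := fun i : bool =>
  count_tail_event (if i then pred1 t0 else predC1 t0) eps) _)).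
  move=> P /=; rewrite ler_normr => /orP[dev_up | dev_down].
  - exists true; rewrite /count_tail_event inE /= mu_t0 -ler_pdivlMl //.
    lra.
  - exists false; rewrite /count_tail_event inE /= mu_not_t0 card_not_t0.
    rewrite -ler_pdivlMl // mulrBr mulVf ?lt0r_neq0 //.
    lra.
by rewrite big_bool mulr_natl mulr2n lerD ?iid_count_upper_tail.
Qed.

End IIDSamples.

Lemma card_ranking m : #|ranking m| = m`!.
Proof. by rewrite -card_Sn; apply: eq_card => x; rewrite !inE. Qed.

Section PerturbedCulture.
Variables (R : realType) (m : nat) (theta : R).

Lemma pc_prob_ge0 : 0 <= theta -> theta <= 1 ->
  forall p : ranking m, 0 <= pc_prob theta p.
Proof.
move=> theta_ge0 theta_le1 p.
by rewrite /pc_prob addr_ge0 ?mulr_ge0 ?subr_ge0 ?invr_ge0.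
Qed.

Lemma pc_prob_sum1 : \sum_(p : ranking m) pc_prob theta p = 1.
Proof.
rewrite big_split /= -mulr_sumr -mulr_sumr sumr_const card_ranking.
rewrite (bigD1 (id_ranking m)) //= eqxx big1 => [|p /negbTE ->] //.
rewrite addr0 mulr1 -[X in _ * X]mulr_natr mul1r mulVf ?mulr1 ?subrKC //.
by rewrite pnatr_eq0 -lt0n fact_gt0.
Qed.

Lemma hatP_pc_prob (p : ranking m) : hatP m theta p = pc_prob theta p.
Proof.
by rewrite /hatP /pc_prob ffunE mul1r; case: eqP; rewrite ?mulr1 ?mulr0.
Qed.

End PerturbedCulture.

Lemma sum_card_fibers n (T : finType) (P : {ffun 'I_n -> T}) :
  (\sum_t #|[set v | P v == t]|)%N = n.
Proof.
rewrite -[RHS]card_ord -sum1_card (partition_big P xpredT) //=.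
by apply: eq_bigr => t _; rewrite -sum1_card; apply: eq_bigl => v; rewrite inE.
Qed.

Lemma dnormalize_total (R : realType) m n (P : dprofile m n) :
  (0 < n)%N -> total_weight (dnormalize R P) = 1.
Proof.
move=> n_gt0; rewrite /total_weight; under eq_bigr do rewrite ffunE.
by rewrite -mulr_suml -natr_sum sum_card_fibers mulfV // pnatr_eq0 -lt0n.
Qed.

Lemma dweight_lt_moved m n (P Q : dprofile m n) (p : ranking m) :
  (dweight Q p < dweight P p)%N -> exists2 v, P v = p & Q v != p.
Proof.
case: (pickP [pred v | (P v == p) && (Q v != p)]) => [v | stay].
  by case/andP=> /eqP Pv Qv _; exists v.
rewrite ltnNge subset_leq_card //; apply/fintype.subsetP => v; rewrite !inE => Pv.
by move: (stay v) => /=; rewrite Pv /= => /negbFE.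
Qed.

Lemma CM_disc_cont (R : realType) m (f : voting_rule R m) n (P : dprofile m n) :
  homogeneous f -> (0 < n)%N -> CM_disc f P -> CM_cont f (dnormalize R P).
Proof.
move=> [hom_disc _] n_gt0 /existsP[Q /andP[fQ_neq_fP /forallP moved_prefer]].
have n_inv_ge0 : (0 : R) <= n%:R^-1 by rewrite invr_ge0.
exists (dnormalize R Q); rewrite -!hom_disc //; split => //.
- by split=> [p|]; rewrite ?dnormalize_total ?ffunE ?mulr_ge0.
- by rewrite !dnormalize_total.
move=> p; rewrite !ffunE ltr_pM2r ?invr_gt0 ?ltr0n // ltr_nat.
case/dweight_lt_moved=> v Pv Qv.
by have := moved_prefer v; rewrite Pv Qv.
Qed.

Section Manipulability.
Variables (R : realType) (m : nat) (theta : R) (f : voting_rule R m) (eps : R).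
Hypothesis not_CM_near_hatP : forall P' : cweights R m,
  (forall p, 0 <= P' p) -> total_weight P' = 1 ->
  (forall p, `|P' p - hatP m theta p| < eps) -> ~ CM_cont f P'.

Lemma CM_disc_far_from_hatP n (P : dprofile m n) :
  homogeneous f -> (0 < n)%N -> CM_disc f P ->
  exists p, eps <= `|(dweight P p)%:R / n%:R - pc_prob theta p|.
Proof.
move=> hom n_gt0 CM_P; apply/existsP; apply: contraT.
rewrite negb_exists => /forallP close; exfalso.
apply: (not_CM_near_hatP (P' := dnormalize R P)); last exact: CM_disc_cont.
- by move=> p; rewrite ffunE mulr_ge0 ?invr_ge0.
- exact: dnormalize_total.
- by move=> p; rewrite ffunE hatP_pc_prob ltNge close.
Qed.

End Manipulability.

Theorem mainTheorem13 (R : realType) (m : nat) (theta : R)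
  (f : voting_rule R m) (eps : R) :
  (1 <= m)%N -> 0 < theta <= 1 -> homogeneous f -> 0 < eps ->
  (forall P' : cweights R m,
      (forall p, 0 <= P' p) -> total_weight P' = 1 ->
      (forall p, `|P' p - hatP m theta p| < eps) ->
      ~ CM_cont f P') ->
  forall n : nat, (1 <= n)%N ->
    rho f n theta <= 2 * (m`!)%:R * expR (- (2 * eps ^+ 2 * n%:R)).
Proof.
move=> _ /andP[theta_gt0 theta_le1] hom eps_gt0 not_CM_near n n_gt0.
have mu_ge0 := @pc_prob_ge0 R m theta (ltW theta_gt0) theta_le1.
pose far p := [pred P : dprofile m n |
  eps <= `|(dweight P p)%:R / n%:R - pc_prob theta p|].
have CM_far P : CM_disc f P -> exists p, far p P.
  exact: CM_disc_far_from_hatP.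
have -> : rho f n theta = iid_prob (pc_prob theta) (@CM_disc R m f n) by [].
apply: (le_trans (iid_prob_union_bound mu_ge0 CM_far)).
apply: (le_trans (y := \sum_(p : ranking m) 2 * expR (- (2 * eps ^+ 2 * n%:R)))).
  apply: ler_sum => p _.
  exact: (iid_freq_deviation mu_ge0 (@pc_prob_sum1 R m theta) p n_gt0 eps_gt0).
by rewrite sumr_const card_ranking -[_ *+ m`!]mulr_natr mulrAC.
Qed.
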